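(* For real $\alpha,\beta$, the inequalities $H_{\alpha }(\cosh x) <\frac{\sinh x}{x}<H_{\beta }(\cosh x)$ hold for all $x\in(0,\infty)$ if and only if $\alpha \leq 0$ and $\beta \geq 3/5$.
   Context: For $t>0$ define $H_{r}(t) =\left( \frac{\sqrt{8+t^{2r}}+t^{r}}{4}\right) ^{1/r}$ if $r\neq 0$ and $H_{0}(t) =t^{1/3}$. *)

From Stdlib Require Import Reals.
Open Scope R_scope.

Definition H (r t : R) : R :=
  if Req_EM_T r 0 then Rpower t (1/3)
  else Rpower ((sqrt (8 + Rpower t (2*r)) + Rpower t r) / 4) (1/r).

(* Write h = sinh x / x and c = cosh x, so that 1 < h < c for x > 0.  For r > 0,
   H_r(c) ^ r is the positive root z of 2 z - 1 / z = c ^ r, hence h < H_r(c) iff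
   2 h^r - h^-r < c^r, i.e. iff gap r x := ln (2 h^r - h^-r) - r ln c is negative; this
   condition is monotone in r.  gap r vanishes at 0+ and its derivative has the sign of
   B(2x) - A(2x)^r, where A(y) = 2 (cosh y - 1) / y^2 (so A(2x) = h^2) and
   B(y) = (y cosh y - sinh y) / (2 (sinh y - y)).  On (0, oo), B < A^(3/5) because
   3/5 ln A - ln B increases from 0, whereas for r < 3/5 the expansions
   A = 1 + y^2/12 + ..., B = 1 + y^2/20 + ... give A^r < B near 0.  For r <= 0,
   H_r(c) <= c^(1/3) < h (Lazarevic's inequality), and for r > 0, H_r(c) >= c / 2^(1/r)
   exceeds h at x = 2^(1/r).
   Every hyperbolic inequality used is proved by writing it as a combination of terms
   y^j e^(k y) and checking that all its Taylor coefficients at 0 are nonnegative. *)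

From Stdlib Require Import Reals Lra Lia List Factorial.
From Coquelicot Require Import Coquelicot.
Import ListNotations.
Open Scope R_scope.

Lemma is_series_ge_term (a : nat -> R) (l : R) (m : nat) :
  is_series a l -> (forall n, 0 <= a n) -> a m <= l.
Proof.
  intros Ha Hpos.
  apply is_series_Reals in Ha.
  apply Rle_trans with (sum_f_R0 a m); [|exact (sum_incr a m l Ha Hpos)].
  destruct m as [|m]; [simpl; lra|].
  rewrite tech5. generalize (cond_pos_sum a m Hpos). lra.
Qed.

Lemma increasing_of_deriv_pos (f df : R -> R) (a b : R) :
  (forall t, a <= t <= b -> is_derive f t (df t)) ->
  (forall t, a < t < b -> 0 < df t) -> a < b -> f a < f b.
Proof.
  intros Hd Hpos Hab.
  destruct (MVT_cor2 f df a b Hab) as [c [Hc1 Hc2]].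
  - intros c Hc. apply is_derive_Reals, Hd. lra.
  - assert (0 < df c * (b - a)) by (apply Rmult_lt_0_compat; [apply Hpos|]; lra). lra.
Qed.

Lemma pos_of_deriv_pos (f df : R -> R) (C b : R) :
  0 < b -> (forall t, 0 < t <= b -> is_derive f t (df t)) ->
  (forall t, 0 < t < b -> 0 < df t) ->
  (forall t, 0 < t <= 1 -> Rabs (f t) <= C * t) -> 0 < f b.
Proof.
  intros Hb Hd Hpos Hsmall.
  (* [f] increases on [(0, b]]; were [f (b / 2) < 0], then [f s < f (b / 2)] would
     contradict [|f s| <= C s] for small [s]. *)
  assert (Hmono : forall u v, 0 < u < v -> v <= b -> f u < f v).
  { intros u v Huv Hv. apply (increasing_of_deriv_pos f df); [intros; apply Hd| intros; apply Hpos|]; lra. }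
  enough (0 <= f (b / 2)) by (generalize (Hmono (b / 2) b ltac:(lra) ltac:(lra)); lra).
  destruct (Rle_or_lt 0 (f (b / 2))) as [|Hneg]; [assumption|exfalso].
  set (s := Rmin (Rmin (b / 4) 1) (- f (b / 2) / (2 * (Rabs C + 1)))).
  assert (HC : 0 <= Rabs C) by apply Rabs_pos.
  assert (Hs1 : s <= Rmin (b / 4) 1) by apply Rmin_l.
  assert (Hs2 : s <= - f (b / 2) / (2 * (Rabs C + 1))) by apply Rmin_r.
  assert (Hs3 : Rmin (b / 4) 1 <= b / 4 /\ Rmin (b / 4) 1 <= 1) by (split; [apply Rmin_l|apply Rmin_r]).
  assert (Hs0 : 0 < s).
  { apply Rmin_pos; [apply Rmin_pos|apply Rdiv_lt_0_compat]; lra. }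
  assert (Hfs := Hsmall s ltac:(lra)).
  assert (HCs : C * s <= Rabs C * s) by (apply Rmult_le_compat_r; [lra|apply Rle_abs]).
  assert (HCs2 : (Rabs C + 1) * s <= - f (b / 2) / 2).
  { apply (Rmult_le_compat_l (Rabs C + 1)) in Hs2; [|lra].
    replace ((Rabs C + 1) * (- f (b / 2) / (2 * (Rabs C + 1)))) with (- f (b / 2) / 2) in Hs2
      by (field; lra). exact Hs2. }
  apply Rabs_le_between in Hfs.
  generalize (Hmono s (b / 2) ltac:(lra) ltac:(lra)). nra.
Qed.

Lemma ln_le_sub_1 (x : R) : 0 < x -> ln x <= x - 1.
Proof. intros Hx. generalize (exp_ineq1_le (ln x)). rewrite exp_ln by lra. lra. Qed.

Lemma ln_nonneg (x : R) : 1 <= x -> 0 <= ln x.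
Proof. intros Hx. rewrite <- ln_1. apply ln_le; lra. Qed.

Lemma ln_bounds_of_bounds (x c : R) : 1 <= x <= c -> 0 <= ln x <= c - 1.
Proof.
  intros Hx. split; [apply ln_nonneg; lra|].
  generalize (ln_le_sub_1 x ltac:(lra)). lra.
Qed.

Lemma lt_iff_ln_lt (x y : R) : 0 < x -> 0 < y -> (x < y <-> ln x < ln y).
Proof. intros Hx Hy. split; [apply ln_increasing|apply ln_lt_inv]; assumption. Qed.

Lemma le_of_ln_le (x y : R) : 0 < x -> 0 < y -> ln x <= ln y -> x <= y.
Proof.
  intros Hx Hy H. destruct (Rle_or_lt x y) as [|Hlt]; [assumption|].
  generalize (ln_increasing y x Hy Hlt). lra.
Qed.

Lemma Rpower_ge_1 (h r : R) : 1 <= h -> 0 <= r -> 1 <= Rpower h r.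
Proof. intros Hh Hr. rewrite <- (Rpower_O h) by lra. apply Rle_Rpower; assumption. Qed.

Lemma Rpower_sq (a r : R) : 0 < a -> Rpower (a ^ 2) r = Rpower a r ^ 2.
Proof. intros Ha. unfold Rpower. rewrite ln_pow by assumption. simpl. rewrite Rmult_1_r, <- exp_plus. f_equal. ring. Qed.

Lemma Rpower_le_bernoulli (b u : R) : 0 < b <= 1 -> 0 < u -> Rpower u b <= 1 + b * (u - 1).
Proof.
  intros Hb Hu. set (v := 1 + b * (u - 1)).
  assert (Hv : 0 < v) by (unfold v; generalize (Rmult_lt_0_compat b u ltac:(lra) Hu); lra).
  apply le_of_ln_le; [apply exp_pos|exact Hv|]. rewrite ln_Rpower.
  (* concavity of [ln], from [ln z <= z - 1] at [z = u / v] and [z = 1 / v] *)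
  generalize (ln_le_sub_1 (u / v) ltac:(apply Rdiv_lt_0_compat; lra))
    (ln_le_sub_1 (/ v) ltac:(apply Rinv_0_lt_compat; lra)).
  rewrite ln_div, ln_Rinv by lra. intros H1 H2.
  assert (E : b * (u / v - 1) + (1 - b) * (/ v - 1) = 0) by (unfold v in *; field; lra).
  assert (b * (ln u - ln v) <= b * (u / v - 1)) by (apply Rmult_le_compat_l; lra).
  assert ((1 - b) * (- ln v) <= (1 - b) * (/ v - 1)) by (apply Rmult_le_compat_l; lra).
  lra.
Qed.

Lemma Rpower_ge_bernoulli (l u : R) : 1 <= l -> 0 < u -> 1 + l * (u - 1) <= Rpower u l.
Proof.
  intros Hl Hu. set (w := 1 + l * (u - 1)).
  destruct (Rle_or_lt w 0) as [Hw|Hw]; [generalize (exp_pos (l * ln u)); unfold Rpower; lra|].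
  assert (Hb : 0 < / l <= 1) by (split; [apply Rinv_0_lt_compat; lra|rewrite <- Rinv_1; apply Rinv_le_contravar; lra]).
  generalize (Rpower_le_bernoulli (/ l) w Hb Hw).
  replace (1 + / l * (w - 1)) with u by (unfold w; field; lra). intros H.
  apply le_of_ln_le; [exact Hw|apply exp_pos|]. rewrite ln_Rpower.
  generalize (ln_le _ _ (exp_pos _) H). rewrite ln_exp. intros H'.
  apply (Rmult_le_compat_l l) in H'; [|lra].
  replace (l * (/ l * ln w)) with (ln w) in H' by (field; lra). exact H'.
Qed.

(** * Exponential polynomials *)

Fixpoint falling (j n : nat) : R :=
  match j with O => 1 | S j' => INR n * falling j' (pred n) end.

Lemma falling_0 (n : nat) : falling 0 n = 1.
Proof. reflexivity. Qed.

Lemma falling_S (j n : nat) : falling (S j) n = falling j n * (INR n - INR j).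
Proof.
  revert n; induction j as [|j IH]; intros n; [simpl; ring|].
  change (falling (S (S j)) n) with (INR n * falling (S j) (pred n)).
  rewrite IH. change (falling (S j) n) with (INR n * falling j (pred n)).
  destruct n as [|n]; [simpl; ring|]. simpl pred. rewrite !S_INR. ring.
Qed.

Lemma is_series_exp (x : R) : is_series (fun n => x ^ n / INR (fact n)) (exp x).
Proof.
  generalize (is_exp_Reals x). unfold is_pseries. apply is_series_ext.
  intros n. rewrite pow_n_pow. unfold scal; simpl. unfold mult; simpl.
  unfold Rdiv. ring.
Qed.

Lemma is_series_pow_mul_exp (j : nat) (k y : R) :
  is_series (fun n => falling j n * k ^ (n - j) / INR (fact n) * y ^ n)
    (y ^ j * exp (k * y)).
Proof.
  induction j as [|j IH].
  - eapply is_series_ext; [|rewrite pow_O, Rmult_1_l; apply (is_series_exp (k * y))].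
    intros n. simpl. rewrite Nat.sub_0_r, Rpow_mult_distr. unfold Rdiv. ring.
  - apply is_series_decr_1.
    replace (plus _ _) with (scal y (y ^ j * exp (k * y)))
      by (unfold scal, plus, opp; simpl; unfold mult, plus, opp; simpl; field).
    eapply is_series_ext; [|apply (is_series_scal_l y _ _ IH)].
    intros n. rewrite fact_simpl, mult_INR.
    change (falling (S j) (S n)) with (INR (S n) * falling j n).
    rewrite S_INR. unfold scal; simpl; unfold mult; simpl.
    assert (0 < INR (fact n)) by apply INR_fact_lt_0.
    assert (0 <= INR n) by apply pos_INR.
    field. lra.
Qed.

Definition expoly := list (R * nat * R).

Definition expoly_eval (l : expoly) (y : R) : R :=
  fold_right (fun '(a, j, k) acc => a * (y ^ j * exp (k * y)) + acc) 0 l.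

Definition expoly_coef (l : expoly) (n : nat) : R :=
  fold_right (fun '(a, j, k) acc => a * (falling j n * k ^ (n - j)) + acc) 0 l.

Lemma is_series_expoly (l : expoly) (y : R) :
  is_series (fun n => expoly_coef l n / INR (fact n) * y ^ n) (expoly_eval l y).
Proof.
  induction l as [|[[a j] k] l IH]; simpl.
  - generalize (is_series_scal_l 0 _ _ (is_series_exp 0)).
    unfold scal; simpl; unfold mult; simpl. rewrite Rmult_0_l.
    apply is_series_ext. intros n. simpl. unfold Rdiv. ring.
  - eapply is_series_ext;
      [|exact (is_series_plus _ _ _ _ (is_series_scal_l a _ _ (is_series_pow_mul_exp j k y)) IH)].
    intros n. unfold plus, scal; simpl; unfold mult; simpl.
    assert (0 < INR (fact n)) by apply INR_fact_lt_0. field. lra.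
Qed.

Lemma expoly_eval_ge_coef (l : expoly) (y : R) (m : nat) :
  0 <= y -> (forall n, 0 <= expoly_coef l n) ->
  expoly_coef l m / INR (fact m) * y ^ m <= expoly_eval l y.
Proof.
  intros Hy Hcoef. apply (is_series_ge_term _ _ m (is_series_expoly l y)).
  intros n. apply Rmult_le_pos; [|apply pow_le; lra].
  apply Rdiv_le_0_compat; [apply Hcoef|apply INR_fact_lt_0].
Qed.

Lemma expoly_eval_nonneg (l : expoly) (y : R) :
  0 <= y -> (forall n, 0 <= expoly_coef l n) -> 0 <= expoly_eval l y.
Proof.
  intros Hy Hcoef. eapply Rle_trans; [|exact (expoly_eval_ge_coef l y 0 Hy Hcoef)].
  simpl. generalize (Hcoef 0%nat). lra.
Qed.

Lemma expoly_eval_pos (l : expoly) (y : R) (m : nat) :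
  0 < y -> (forall n, 0 <= expoly_coef l n) -> 0 < expoly_coef l m ->
  0 < expoly_eval l y.
Proof.
  intros Hy Hcoef Hm. eapply Rlt_le_trans; [|exact (expoly_eval_ge_coef l y m ltac:(lra) Hcoef)].
  apply Rmult_lt_0_compat; [|apply pow_lt; lra].
  apply Rdiv_lt_0_compat; [exact Hm|apply INR_fact_lt_0].
Qed.

Lemma pow_0_sub (j n : nat) : (j < n)%nat -> 0 ^ (n - j) = 0.
Proof. intros H. apply pow_i. lia. Qed.

Lemma pow_sub (k : R) (j n : nat) : (j <= n)%nat -> k <> 0 -> k ^ (n - j) = k ^ n / k ^ j.
Proof.
  intros H Hk. replace n with ((n - j) + j)%nat at 2 by lia. rewrite pow_add.
  field. apply pow_nonzero; auto.
Qed.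

Lemma pow_opp (k : R) (n : nat) : (- k) ^ n = (-1) ^ n * k ^ n.
Proof. rewrite <- Rpow_mult_distr. f_equal. ring. Qed.

Lemma pow_m1_cases (n : nat) : (-1) ^ n = 1 \/ (-1) ^ n = -1.
Proof. induction n as [|n [IH|IH]]; simpl; [left|right|left]; try rewrite IH; ring. Qed.

(* For a concrete list [l], reduces [forall n, 0 <= expoly_coef l n] to finitely many
   numeric checks for [n < N] and to polynomial inequalities in [INR n], [3 ^ n], ...
   for [N <= n], split according to the parity of [n].  Negative rates must be written
   [-(k)], not [-k], so that [pow_opp] applies. *)
Ltac expoly_coef_cases N :=
  let n := fresh "n" in
  let Hn := fresh "Hn" in
  intro n; destruct (Nat.lt_ge_cases n N) as [Hn|Hn];
  [ repeat (destruct n as [|n];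
      [cbv [expoly_coef fold_right]; simpl; lra | try (exfalso; lia)])
  | assert (INR N <= INR n) by (apply le_INR; exact Hn); simpl INR in *;
    cbv [expoly_coef fold_right];
    rewrite ?pow_0_sub by lia;
    rewrite ?(pow_sub _ _ n) by (lia || (intro; lra));
    rewrite ?pow_opp, ?pow1, ?falling_S, ?falling_0;
    simpl pow; simpl INR;
    destruct (pow_m1_cases n) as [-> | ->] ].

Lemma exp_opp_mul (k y : R) : exp (- k * y) = / exp (k * y).
Proof. rewrite <- exp_Ropp. f_equal. ring. Qed.

Lemma exp_mul_2 (y : R) : exp (2 * y) = exp y ^ 2.
Proof. replace (2 * y) with (y + y) by ring. rewrite exp_plus. ring. Qed.

Lemma exp_mul_3 (y : R) : exp (3 * y) = exp y ^ 3.
Proof. replace (3 * y) with (y + y + y) by ring. rewrite !exp_plus. ring. Qed.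

Ltac expoly_identity :=
  cbv [expoly_eval fold_right]; unfold sinh, cosh;
  rewrite ?exp_opp_mul, ?Rmult_0_l, ?Rmult_1_l, ?exp_0, ?exp_mul_2, ?exp_mul_3, ?exp_Ropp;
  field; apply Rgt_not_eq, exp_pos.

(** * Hyperbolic inequalities *)

Lemma sinh_sub_gt_cube (y : R) : 0 < y -> y ^ 3 / 6 < sinh y - y.
Proof.
  intros Hy. enough (0 < sinh y - y - y ^ 3 / 6) by lra.
  replace (sinh y - y - y ^ 3 / 6) with (expoly_eval
    [(-1/2, 0%nat, -(1)); (-1, 1%nat, 0); (-1/6, 3%nat, 0); (1/2, 0%nat, 1)] y)
    by expoly_identity.
  apply (expoly_eval_pos _ _ 5 Hy); [expoly_coef_cases 4%nat; lra|cbv; lra].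
Qed.

Lemma mul_cosh_sub_sinh_gt_cube (y : R) : 0 < y -> y ^ 3 / 3 < y * cosh y - sinh y.
Proof.
  intros Hy. enough (0 < y * cosh y - sinh y - y ^ 3 / 3) by lra.
  replace (y * cosh y - sinh y - y ^ 3 / 3) with (expoly_eval
    [(1/2, 0%nat, -(1)); (1/2, 1%nat, -(1)); (-1/3, 3%nat, 0); (-1/2, 0%nat, 1);
     (1/2, 1%nat, 1)] y) by expoly_identity.
  apply (expoly_eval_pos _ _ 5 Hy); [expoly_coef_cases 4%nat; nra|cbv; lra].
Qed.

Lemma cosh_sub_1_gt_sq (y : R) : 0 < y -> y ^ 2 / 2 < cosh y - 1.
Proof.
  intros Hy. enough (0 < cosh y - 1 - y ^ 2 / 2) by lra.
  replace (cosh y - 1 - y ^ 2 / 2) with (expoly_eval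
    [(1/2, 0%nat, -(1)); (-1, 0%nat, 0); (-1/2, 2%nat, 0); (1/2, 0%nat, 1)] y)
    by expoly_identity.
  apply (expoly_eval_pos _ _ 4 Hy); [expoly_coef_cases 3%nat; nra|cbv; lra].
Qed.

Lemma cosh_sub_1_le (y : R) : 0 <= y -> cosh y - 1 <= y ^ 2 * cosh y / 2.
Proof.
  intros Hy. enough (0 <= y ^ 2 * cosh y / 2 - cosh y + 1) by lra.
  replace (y ^ 2 * cosh y / 2 - cosh y + 1) with (expoly_eval
    [(-1/2, 0%nat, -(1)); (1/4, 2%nat, -(1)); (1, 0%nat, 0); (-1/2, 0%nat, 1);
     (1/4, 2%nat, 1)] y) by expoly_identity.
  apply (expoly_eval_nonneg _ _ Hy). expoly_coef_cases 3%nat; nra.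
Qed.

Lemma mul_cosh_sub_sinh_le (y : R) : 0 <= y -> y * cosh y - sinh y <= y ^ 3 * cosh y / 3.
Proof.
  intros Hy. enough (0 <= y ^ 3 * cosh y / 3 - y * cosh y + sinh y) by lra.
  replace (y ^ 3 * cosh y / 3 - y * cosh y + sinh y) with (expoly_eval
    [(-1/2, 0%nat, -(1)); (-1/2, 1%nat, -(1)); (1/6, 3%nat, -(1)); (1/2, 0%nat, 1);
     (-1/2, 1%nat, 1); (1/6, 3%nat, 1)] y) by expoly_identity.
  apply (expoly_eval_nonneg _ _ Hy). expoly_coef_cases 4%nat; nra.
Qed.

Lemma sinh_sub_le (y : R) : 0 <= y -> sinh y - y <= y ^ 3 * cosh y / 6.
Proof.
  intros Hy. enough (0 <= y ^ 3 * cosh y / 6 - sinh y + y) by lra.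
  replace (y ^ 3 * cosh y / 6 - sinh y + y) with (expoly_eval
    [(1/2, 0%nat, -(1)); (1/12, 3%nat, -(1)); (1, 1%nat, 0); (-1/2, 0%nat, 1);
     (1/12, 3%nat, 1)] y) by expoly_identity.
  apply (expoly_eval_nonneg _ _ Hy). expoly_coef_cases 4%nat; nra.
Qed.

Lemma mul_cosh_sub_3sinh_ge (y : R) :
  0 <= y -> y ^ 5 / 60 <= y * cosh y - 3 * sinh y + 2 * y.
Proof.
  intros Hy. enough (0 <= y * cosh y - 3 * sinh y + 2 * y - y ^ 5 / 60) by lra.
  replace (y * cosh y - 3 * sinh y + 2 * y - y ^ 5 / 60) with (expoly_eval
    [(3/2, 0%nat, -(1)); (1/2, 1%nat, -(1)); (2, 1%nat, 0); (-1/60, 5%nat, 0);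
     (-3/2, 0%nat, 1); (1/2, 1%nat, 1)] y) by expoly_identity.
  apply (expoly_eval_nonneg _ _ Hy). expoly_coef_cases 6%nat; nra.
Qed.

Lemma cosh_sub_taylor_le (y : R) :
  0 <= y -> cosh y - 1 - y ^ 2 / 2 <= y ^ 4 * cosh y / 24.
Proof.
  intros Hy. enough (0 <= y ^ 4 * cosh y / 24 - cosh y + 1 + y ^ 2 / 2) by lra.
  replace (y ^ 4 * cosh y / 24 - cosh y + 1 + y ^ 2 / 2) with (expoly_eval
    [(-1/2, 0%nat, -(1)); (1/48, 4%nat, -(1)); (1, 0%nat, 0); (1/2, 2%nat, 0);
     (-1/2, 0%nat, 1); (1/48, 4%nat, 1)] y) by expoly_identity.
  apply (expoly_eval_nonneg _ _ Hy). expoly_coef_cases 5%nat; nra.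
Qed.

Lemma pow3_ge_cubic (n : nat) :
  (5 <= n)%nat -> 4 * INR n * (INR n - 1) * (INR n - 2) + 3 <= 3 ^ n.
Proof.
  intros H. induction H; [simpl; lra|].
  rewrite S_INR. simpl pow.
  assert (5 <= INR m) by (apply (le_INR 5) in H; simpl in H; lra). nra.
Qed.

Lemma cube_mul_cosh_lt_sinh_cube (y : R) : 0 < y -> y ^ 3 * cosh y < sinh y ^ 3.
Proof.
  intros Hy. enough (0 < sinh y ^ 3 - y ^ 3 * cosh y) by lra.
  replace (sinh y ^ 3 - y ^ 3 * cosh y) with (expoly_eval
    [(-1/8, 0%nat, -(3)); (3/8, 0%nat, -(1)); (-1/2, 3%nat, -(1)); (-3/8, 0%nat, 1);
     (-1/2, 3%nat, 1); (1/8, 0%nat, 3)] y) by expoly_identity.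
  apply (expoly_eval_pos _ _ 7 Hy); [|cbv; lra].
  expoly_coef_cases 6%nat; assert (H3 := pow3_ge_cubic n ltac:(lia)); nra.
Qed.

Lemma cosh_ge_1 (t : R) : 1 <= cosh t.
Proof.
  unfold cosh. rewrite exp_Ropp. assert (0 < exp t) by apply exp_pos.
  replace ((exp t + / exp t) / 2) with (1 + (exp t - 1) ^ 2 / exp t / 2) by (field; lra).
  assert (0 <= (exp t - 1) ^ 2 / exp t) by (apply Rdiv_le_0_compat; [apply pow2_ge_0|lra]).
  lra.
Qed.

Lemma cosh_le_3 (t : R) : 0 <= t <= 1 -> cosh t <= 3.
Proof.
  intros Ht. unfold cosh.
  assert (exp (- t) <= exp t).
  { destruct (Req_dec t 0) as [->|]; [rewrite Ropp_0; lra|apply Rlt_le, exp_increasing; lra]. }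
  assert (exp t <= exp 1).
  { destruct (Req_dec t 1) as [->|]; [lra|apply Rlt_le, exp_increasing; lra]. }
  generalize exp_le_3. lra.
Qed.

Lemma cosh_sub_1_le_lin (t : R) : 0 <= t <= 1 -> cosh t - 1 <= 3 / 2 * t.
Proof.
  intros Ht. generalize (cosh_sub_1_le t ltac:(lra)) (cosh_le_3 t Ht) (cosh_ge_1 t). nra.
Qed.

Lemma sinh_pos (x : R) : 0 < x -> 0 < sinh x.
Proof.
  intros Hx. generalize (sinh_sub_gt_cube x Hx). assert (0 < x ^ 3) by (apply pow_lt; lra). lra.
Qed.

Lemma sinh_lt_cosh (x : R) : sinh x < cosh x.
Proof. unfold sinh, cosh. generalize (exp_pos (- x)). lra. Qed.

Lemma sinhc_gt_1 (x : R) : 0 < x -> 1 < sinh x / x.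
Proof.
  intros Hx. apply Rmult_lt_reg_r with x; [exact Hx|].
  replace (sinh x / x * x) with (sinh x) by (field; lra).
  generalize (sinh_sub_gt_cube x Hx). assert (0 < x ^ 3) by (apply pow_lt; lra). lra.
Qed.

Lemma sinhc_lt_cosh (x : R) : 0 < x -> sinh x / x < cosh x.
Proof.
  intros Hx. apply Rmult_lt_reg_r with x; [exact Hx|].
  replace (sinh x / x * x) with (sinh x) by (field; lra).
  generalize (mul_cosh_sub_sinh_gt_cube x Hx). assert (0 < x ^ 3) by (apply pow_lt; lra). lra.
Qed.

Lemma cbrt_cosh_lt_sinhc (x : R) : 0 < x -> Rpower (cosh x) (1 / 3) < sinh x / x.
Proof.
  intros Hx. assert (Hh := sinhc_gt_1 x Hx). assert (Hc := cosh_ge_1 x).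
  assert (Hcube : cosh x < (sinh x / x) ^ 3).
  { apply Rmult_lt_reg_r with (x ^ 3); [apply pow_lt; lra|].
    rewrite <- Rpow_mult_distr. replace (sinh x / x * x) with (sinh x) by (field; lra).
    rewrite Rmult_comm. apply cube_mul_cosh_lt_sinh_cube, Hx. }
  apply lt_iff_ln_lt; [apply exp_pos|lra|]. rewrite ln_Rpower.
  generalize (ln_increasing (cosh x) _ ltac:(lra) Hcube). rewrite ln_pow by lra. simpl INR. lra.
Qed.

Lemma cosh_double (x : R) : cosh (2 * x) = cosh x ^ 2 + sinh x ^ 2.
Proof.
  unfold cosh, sinh. rewrite !exp_Ropp, exp_mul_2.
  assert (0 < exp x) by apply exp_pos. field. lra.
Qed.

Lemma sinh_double (x : R) : sinh (2 * x) = 2 * sinh x * cosh x.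
Proof.
  unfold cosh, sinh. rewrite !exp_Ropp, exp_mul_2.
  assert (0 < exp x) by apply exp_pos. field. lra.
Qed.

Lemma cosh_sq_sub_sinh_sq (x : R) : cosh x ^ 2 - sinh x ^ 2 = 1.
Proof.
  unfold cosh, sinh. rewrite exp_Ropp. assert (0 < exp x) by apply exp_pos. field. lra.
Qed.

(** * The quotients A and B *)

Definition ratioA (y : R) : R := 2 * (cosh y - 1) / y ^ 2.

Definition ratioB (y : R) : R := (y * cosh y - sinh y) / (2 * (sinh y - y)).

Lemma ratioA_double (x : R) : 0 < x -> ratioA (2 * x) = (sinh x / x) ^ 2.
Proof.
  intros Hx. unfold ratioA. rewrite cosh_double.
  generalize (cosh_sq_sub_sinh_sq x). intros E.
  replace (cosh x ^ 2) with (1 + sinh x ^ 2) by lra. field. lra.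
Qed.

Lemma ratioA_bounds (y : R) : 0 < y -> 1 <= ratioA y <= cosh y.
Proof.
  intros Hy. assert (0 < y ^ 2) by (apply pow_lt; lra). unfold ratioA.
  generalize (cosh_sub_1_gt_sq y Hy) (cosh_sub_1_le y ltac:(lra)). intros H1 H2.
  split; [apply Rmult_le_reg_r with (y ^ 2)|apply Rmult_le_reg_r with (y ^ 2)]; auto;
    unfold Rdiv; rewrite Rmult_assoc, Rinv_l by lra; lra.
Qed.

Lemma ratioB_bounds (y : R) : 0 < y -> 1 <= ratioB y <= cosh y.
Proof.
  intros Hy. assert (0 < y ^ 3) by (apply pow_lt; lra). unfold ratioB.
  generalize (sinh_sub_gt_cube y Hy) (mul_cosh_sub_sinh_le y ltac:(lra))
    (mul_cosh_sub_3sinh_ge y ltac:(lra)) (cosh_ge_1 y). intros H1 H2 H3 H4.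
  assert (0 < y ^ 5) by (apply pow_lt; lra).
  split; [apply Rmult_le_reg_r with (2 * (sinh y - y))|apply Rmult_le_reg_r with (2 * (sinh y - y))];
    try lra; unfold Rdiv; rewrite Rmult_assoc, Rinv_l by lra; nra.
Qed.

Definition log_gap (y : R) : R := 3 / 5 * ln (ratioA y) - ln (ratioB y).

Definition log_gap_num (y : R) : R :=
  3 * (y * (cosh y + 1) - 2 * sinh y) * (y * cosh y - sinh y) * (sinh y - y)
  - 5 * y * sinh y * (y * sinh y * (sinh y - y) - (y * cosh y - sinh y) * (cosh y - 1)).

Lemma is_derive_log_gap (y : R) : 0 < y ->
  is_derive log_gap y
    (log_gap_num y / (5 * y * sinh y * (y * cosh y - sinh y) * (sinh y - y))).
Proof.
  intros Hy.
  generalize (cosh_sub_1_gt_sq y Hy) (mul_cosh_sub_sinh_gt_cube y Hy) (sinh_sub_gt_cube y Hy)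
    (sinh_pos y Hy).
  assert (0 < y ^ 3) by (apply pow_lt; lra). assert (0 < y ^ 2) by (apply pow_lt; lra).
  unfold log_gap, ratioA, ratioB, log_gap_num, cosh, sinh. intros HC HN HM HS.
  auto_derive.
  - repeat split; try (intro; nra);
    (apply Rmult_lt_0_compat; [|apply Rinv_0_lt_compat]); nra.
  - rewrite exp_Ropp in *. set (u := exp y) in *. assert (0 < u) by apply exp_pos.
    assert (0 < u * u - 1) by
      (replace (u * u - 1) with (2 * u * ((u - / u) / 2)) by (field; lra); nra).
    assert (0 < u * u - 1 - y * (u * 2)) by
      (replace (u * u - 1 - y * (u * 2)) with (2 * u * ((u - / u) / 2 - y)) by (field; lra); nra).
    assert (0 < y * (u * u + 1) - (u * u - 1)) by
      (replace (y * (u * u + 1) - (u * u - 1))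
         with (2 * u * (y * ((u + / u) / 2) - (u - / u) / 2)) by (field; lra); nra).
    assert (0 < u * u + 1 + -1 * (u * 2)) by
      (replace (u * u + 1 + -1 * (u * 2)) with (2 * u * ((u + / u) / 2 - 1)) by (field; lra); nra).
    field. repeat split; intro; lra.
Qed.

Lemma log_gap_num_pos (y : R) : 0 < y -> 0 < log_gap_num y.
Proof.
  intros Hy.
  replace (log_gap_num y) with (expoly_eval
    [(-3/4, 0%nat, -(3)); (-7/4, 1%nat, -(3)); (-3/8, 2%nat, -(3)); (-1, 1%nat, -(2));
     (-7/4, 2%nat, -(2)); (1/2, 3%nat, -(2)); (9/4, 0%nat, -(1)); (7/4, 1%nat, -(1));
     (-35/8, 2%nat, -(1)); (-3/2, 3%nat, -(1)); (2, 1%nat, 0); (-4, 3%nat, 0);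
     (-9/4, 0%nat, 1); (7/4, 1%nat, 1); (35/8, 2%nat, 1); (-3/2, 3%nat, 1);
     (-1, 1%nat, 2); (7/4, 2%nat, 2); (1/2, 3%nat, 2); (3/4, 0%nat, 3);
     (-7/4, 1%nat, 3); (3/8, 2%nat, 3)] y) by (unfold log_gap_num; expoly_identity).
  apply (expoly_eval_pos _ _ 11 Hy); [|cbv; lra].
  (* for [n >= 15] the [3 ^ n], [2 ^ n] and polynomial parts of the coefficient are
     bounded below separately *)
  expoly_coef_cases 15%nat;
  assert (H2 : 2 ^ 15 <= 2 ^ n) by (apply Rle_pow; lra || lia);
  assert (H3 : 0 <= 3 ^ n) by (apply pow_le; lra);
  simpl in H2;
  assert (A1 : 0 <= 3 ^ n * (INR n * INR n - 15 * INR n + 18)) by (apply Rmult_le_pos; nra);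
  assert (A2 : 24 * (INR n * (INR n * INR n + 4 * INR n - 13))
               <= 2 ^ n * (INR n * (INR n * INR n + 4 * INR n - 13)))
    by (apply Rmult_le_compat_r; nra);
  assert (A3 : 0 <= 3 * INR n * (7 * INR n - 15) + 35 * INR n * (INR n - 1) / 4
                    + 7 * INR n / 2 - 9 / 2) by nra;
  lra.
Qed.

Lemma log_gap_pos (y : R) : 0 < y -> 0 < log_gap y.
Proof.
  intros Hy. apply (pos_of_deriv_pos log_gap
    (fun t => log_gap_num t / (5 * t * sinh t * (t * cosh t - sinh t) * (sinh t - t))) (3 / 2) y Hy).
  - intros t Ht. apply is_derive_log_gap. lra.
  - intros t Ht. apply Rdiv_lt_0_compat; [apply log_gap_num_pos; lra|].
    generalize (mul_cosh_sub_sinh_gt_cube t ltac:(lra)) (sinh_sub_gt_cube t ltac:(lra))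
      (sinh_pos t ltac:(lra)).
    assert (0 < t ^ 3) by (apply pow_lt; lra).
    intros HN HM HS. assert (0 < 5 * t * sinh t) by (apply Rmult_lt_0_compat; lra).
    apply Rmult_lt_0_compat; [apply Rmult_lt_0_compat|]; lra.
  - intros t Ht. unfold log_gap.
    generalize (ln_bounds_of_bounds _ _ (ratioA_bounds t ltac:(lra)))
      (ln_bounds_of_bounds _ _ (ratioB_bounds t ltac:(lra))) (cosh_sub_1_le_lin t ltac:(lra)).
    intros. apply Rabs_le. lra.
Qed.

Lemma ratioB_lt_ratioA_pow (y : R) : 0 < y -> ratioB y < Rpower (ratioA y) (3 / 5).
Proof.
  intros Hy. generalize (log_gap_pos y Hy) (ratioA_bounds y Hy) (ratioB_bounds y Hy).
  unfold log_gap. intros HJ HA HB.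
  apply ln_lt_inv; [lra|apply exp_pos|]. rewrite ln_Rpower. lra.
Qed.

Lemma ratioA_sub_1_le (y : R) : 0 < y -> ratioA y - 1 <= y ^ 2 * cosh y / 12.
Proof.
  intros Hy. assert (0 < y ^ 2) by (apply pow_lt; lra).
  generalize (cosh_sub_taylor_le y ltac:(lra)). intros Htaylor.
  apply Rmult_le_reg_r with (y ^ 2); [assumption|]. unfold ratioA.
  replace ((2 * (cosh y - 1) / y ^ 2 - 1) * y ^ 2) with (2 * (cosh y - 1 - y ^ 2 / 2)) by (field; lra).
  replace (y ^ 2 * cosh y / 12 * y ^ 2) with (2 * (y ^ 4 * cosh y / 24)) by field. lra.
Qed.

Lemma ratioB_sub_1_ge (y : R) : 0 < y -> y ^ 2 / (20 * cosh y) <= ratioB y - 1.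
Proof.
  intros Hy. assert (0 < y ^ 2) by (apply pow_lt; lra).
  generalize (mul_cosh_sub_3sinh_ge y ltac:(lra)) (sinh_sub_le y ltac:(lra))
    (sinh_sub_gt_cube y Hy) (cosh_ge_1 y). intros H9 H8 H7 Hc.
  assert (0 < y ^ 3) by (apply pow_lt; lra).
  unfold ratioB.
  replace ((y * cosh y - sinh y) / (2 * (sinh y - y)) - 1)
    with ((y * cosh y - 3 * sinh y + 2 * y) / (2 * (sinh y - y))) by (field; lra).
  apply Rmult_le_reg_r with (20 * cosh y * (2 * (sinh y - y))); [nra|].
  field_simplify; [|lra|lra].
  assert (y ^ 2 * (2 * (sinh y - y)) <= y ^ 2 * (y ^ 3 * cosh y / 3))
    by (apply Rmult_le_compat_l; lra).
  nra.
Qed.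

Lemma ratioA_pow_lt_ratioB_near_0 (r : R) : 0 < r < 3 / 5 ->
  exists d, 0 < d /\ forall y, 0 < y <= d -> Rpower (ratioA y) r < ratioB y.
Proof.
  intros Hr. set (g := 3 / (5 * r)).
  assert (Hg : 1 < g) by (unfold g; apply Rmult_lt_reg_r with (5 * r); [lra|]; field_simplify; lra).
  exists (Rmin 1 ((g - 1) / 12)). split; [apply Rmin_pos; lra|].
  intros y Hy. generalize (Rmin_l 1 ((g - 1) / 12)) (Rmin_r 1 ((g - 1) / 12)). intros Hd1 Hd2.
  assert (Hc1 := cosh_ge_1 y).
  assert (Hcosh : 20 * r * cosh y ^ 2 < 12).
  { assert (cosh y ^ 2 < g) by (generalize (cosh_sub_1_le_lin y ltac:(lra)) (cosh_le_3 y ltac:(lra)); nra).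
    apply (Rmult_lt_compat_l (20 * r)) in H; [|lra].
    replace (20 * r * g) with 12 in H by (unfold g; field; lra). lra. }
  assert (Hy2 : 0 < y ^ 2) by (apply pow_lt; lra).
  assert (HA := ratioA_bounds y ltac:(lra)).
  apply Rle_lt_trans with (1 + r * (ratioA y - 1)); [apply Rpower_le_bernoulli; lra|].
  apply Rle_lt_trans with (1 + r * (y ^ 2 * cosh y / 12));
    [generalize (ratioA_sub_1_le y ltac:(lra)); nra|].
  apply Rlt_le_trans with (1 + y ^ 2 / (20 * cosh y)); [|generalize (ratioB_sub_1_ge y ltac:(lra)); lra].
  apply Rplus_lt_compat_l, Rmult_lt_reg_r with (240 * cosh y); [lra|].
  field_simplify; [|lra]. nra.
Qed.

(** * The means H_r *)

Definition phi (a : R) : R := (sqrt (8 + a * a) + a) / 4.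

Definition phi_inv (z : R) : R := 2 * z - / z.

Lemma phi_pos (a : R) : 0 < phi a.
Proof.
  unfold phi. assert (Hs := sqrt_sqrt (8 + a * a) ltac:(nra)).
  generalize (sqrt_pos (8 + a * a)). nra.
Qed.

Lemma phi_inv_phi (a : R) : phi_inv (phi a) = a.
Proof.
  generalize (phi_pos a). unfold phi_inv, phi. intros Hp.
  assert (Hs := sqrt_sqrt (8 + a * a) ltac:(nra)).
  set (s := sqrt (8 + a * a)) in *.
  replace (2 * ((s + a) / 4) - / ((s + a) / 4)) with (((s + a) * (s + a) - 8) / (2 * (s + a)))
    by (field; lra).
  apply Rmult_eq_reg_r with (2 * (s + a)); [|lra].
  unfold Rdiv. rewrite Rmult_assoc, Rinv_l by lra. nra.
Qed.

Lemma phi_inv_increasing (z w : R) : 0 < z -> z < w -> phi_inv z < phi_inv w.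
Proof.
  intros Hz Hzw. unfold phi_inv.
  assert (/ w < / z) by (apply Rinv_lt_contravar; nra). lra.
Qed.

Lemma phi_inv_lt_iff (z w : R) : 0 < z -> 0 < w -> (phi_inv z < phi_inv w <-> z < w).
Proof.
  intros Hz Hw. split; [|apply phi_inv_increasing; assumption].
  intros H. destruct (Rtotal_order z w) as [|[->|Hwz]]; [assumption|lra|].
  generalize (phi_inv_increasing w z Hw Hwz). lra.
Qed.

Lemma lt_phi_iff (z a : R) : 0 < z -> (z < phi a <-> phi_inv z < a).
Proof.
  intros Hz. rewrite <- (phi_inv_phi a) at 2.
  rewrite phi_inv_lt_iff by (apply phi_pos || assumption). reflexivity.
Qed.

Lemma phi_lt_iff (z a : R) : 0 < z -> (phi a < z <-> a < phi_inv z).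
Proof.
  intros Hz. rewrite <- (phi_inv_phi a) at 2.
  rewrite phi_inv_lt_iff by (apply phi_pos || assumption). reflexivity.
Qed.

Lemma phi_inv_ge_1 (w : R) : 1 <= w -> 1 <= phi_inv w.
Proof.
  intros Hw. unfold phi_inv.
  assert (/ w <= 1) by (rewrite <- Rinv_1; apply Rinv_le_contravar; lra). lra.
Qed.

Lemma phi_inv_Rpower_le (w l : R) : 1 <= w -> 1 <= l ->
  phi_inv (Rpower w l) <= Rpower (phi_inv w) l.
Proof.
  intros Hw Hl. set (z := / (w * w)).
  assert (Hz : 0 < z <= 1).
  { unfold z. split; [apply Rinv_0_lt_compat; nra|rewrite <- Rinv_1; apply Rinv_le_contravar; nra]. }
  (* [phi_inv w = w (2 - z)] and [phi_inv (w ^ l) = w ^ l (2 - z ^ l)]; Bernoulli bounds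
     [(2 - z) ^ l] from below and [z ^ l] from above by the same tangent line. *)
  assert (Hphi : phi_inv w = w * (2 - z)) by (unfold phi_inv, z; field; lra).
  assert (Hinv : / Rpower w l = Rpower w l * Rpower z l).
  { unfold z, Rpower. rewrite ln_Rinv, ln_mult by nra.
    rewrite <- exp_plus, <- exp_Ropp. f_equal. ring. }
  rewrite Hphi, <- Rpower_mult_distr by lra. unfold phi_inv. rewrite Hinv.
  generalize (Rpower_ge_bernoulli l (2 - z) Hl ltac:(lra)) (Rpower_ge_bernoulli l z Hl ltac:(lra))
    (exp_pos (l * ln w)). fold (Rpower w l). intros B1 B2 Hpos.
  apply Rle_trans with (Rpower w l * (1 + l * (2 - z - 1))); [|apply Rmult_le_compat_l; lra].
  nra.
Qed.

Lemma H_eq (r t : R) : r <> 0 -> H r t = Rpower (phi (Rpower t r)) (1 / r).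
Proof.
  intros Hr. unfold H. destruct (Req_EM_T r 0) as [|_]; [contradiction|].
  unfold phi. replace (Rpower t (2 * r)) with (Rpower t r * Rpower t r); [reflexivity|].
  rewrite <- Rpower_plus. f_equal. ring.
Qed.

Lemma H_0 (t : R) : H 0 t = Rpower t (1 / 3).
Proof. unfold H. destruct (Req_EM_T 0 0); [reflexivity|lra]. Qed.

Lemma lt_Rpower_inv_iff (h p r : R) : 0 < r -> 0 < h -> 0 < p ->
  (h < Rpower p (1 / r) <-> Rpower h r < p).
Proof.
  intros Hr Hh Hp.
  rewrite (lt_iff_ln_lt h), (lt_iff_ln_lt _ p), !ln_Rpower by (apply exp_pos || assumption).
  replace (ln p) with (r * (1 / r * ln p)) at 2 by (field; lra).
  split; [apply Rmult_lt_compat_l|apply Rmult_lt_reg_l]; assumption.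
Qed.

Lemma Rpower_inv_lt_iff (h p r : R) : 0 < r -> 0 < h -> 0 < p ->
  (Rpower p (1 / r) < h <-> p < Rpower h r).
Proof.
  intros Hr Hh Hp.
  rewrite (lt_iff_ln_lt _ h), (lt_iff_ln_lt p), !ln_Rpower by (apply exp_pos || assumption).
  replace (ln p) with (r * (1 / r * ln p)) at 2 by (field; lra).
  split; [apply Rmult_lt_compat_l|apply Rmult_lt_reg_l]; assumption.
Qed.

Lemma lt_H_iff (r t h : R) : 0 < r -> 0 < h ->
  (h < H r t <-> phi_inv (Rpower h r) < Rpower t r).
Proof.
  intros Hr Hh. rewrite H_eq, lt_Rpower_inv_iff, lt_phi_iff by (apply exp_pos || apply phi_pos || lra).
  reflexivity.
Qed.

Lemma H_lt_iff (r t h : R) : 0 < r -> 0 < h ->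
  (H r t < h <-> Rpower t r < phi_inv (Rpower h r)).
Proof.
  intros Hr Hh. rewrite H_eq, Rpower_inv_lt_iff, phi_lt_iff by (apply exp_pos || apply phi_pos || lra).
  reflexivity.
Qed.

Lemma lt_H_mono (p q t h : R) : 0 < p <= q -> 1 <= h -> h < H p t -> h < H q t.
Proof.
  intros Hpq Hh. rewrite !lt_H_iff by lra. intros Hp.
  set (l := q / p). assert (Hl : 1 <= l) by (unfold l; apply Rmult_le_reg_r with p; [lra|]; field_simplify; lra).
  assert (Hq : forall u, Rpower u q = Rpower (Rpower u p) l) by (intros u; rewrite Rpower_mult; f_equal; unfold l; field; lra).
  rewrite !Hq. apply Rle_lt_trans with (Rpower (phi_inv (Rpower h p)) l).
  - apply phi_inv_Rpower_le; [apply Rpower_ge_1|]; lra.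
  - apply Rlt_Rpower_l; [lra|]. split; [|exact Hp].
    generalize (phi_inv_ge_1 _ (Rpower_ge_1 h p Hh ltac:(lra))). lra.
Qed.

Lemma H_le_cbrt (r t : R) : r <= 0 -> 0 < t -> H r t <= Rpower t (1 / 3).
Proof.
  intros Hr Ht. destruct (Req_dec r 0) as [->|Hr0]; [rewrite H_0; lra|].
  rewrite H_eq by assumption.
  set (z := Rpower t (r / 3)). assert (Hz : 0 < z) by apply exp_pos.
  assert (Hz3 : Rpower t r = z ^ 3).
  { unfold z. rewrite <- Rpower_pow, Rpower_mult by apply exp_pos. f_equal. simpl. field. }
  (* [phi_inv z <= z ^ 3] is [(z ^ 2 - 1) ^ 2 >= 0] *)
  assert (Hzphi : z <= phi (Rpower t r)).
  { destruct (Rle_or_lt z (phi (Rpower t r))) as [|Hlt]; [assumption|exfalso].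
    apply phi_lt_iff in Hlt; [|assumption]. rewrite Hz3 in Hlt. unfold phi_inv in Hlt.
    apply (Rmult_lt_compat_r z) in Hlt; [|assumption].
    replace ((2 * z - / z) * z) with (2 * z * z - 1) in Hlt by (field; lra).
    generalize (pow2_ge_0 (z * z - 1)). simpl in Hlt. nra. }
  apply le_of_ln_le; [apply exp_pos|apply exp_pos|]. rewrite !ln_Rpower.
  generalize (ln_le _ _ Hz Hzphi). unfold z. rewrite ln_Rpower. intros Hln.
  assert (Hri : 1 / r < 0) by (unfold Rdiv; rewrite Rmult_1_l; apply Rinv_lt_0_compat; lra).
  apply (Rmult_le_compat_neg_l (1 / r)) in Hln; [|lra].
  replace (1 / r * (r / 3 * ln t)) with (1 / 3 * ln t) in Hln by (field; lra). exact Hln.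
Qed.

Lemma H_ge_div (r t : R) : 0 < r -> 0 < t -> t / Rpower 2 (1 / r) <= H r t.
Proof.
  intros Hr Ht. rewrite H_eq by lra. assert (Hr' : 0 < 1 / r) by (apply Rdiv_lt_0_compat; lra).
  set (a := Rpower t r). assert (Ha : 0 < a) by apply exp_pos.
  assert (Hphi : a / 2 <= phi a).
  { unfold phi. assert (a <= sqrt (8 + a * a)); [|lra].
    rewrite <- (sqrt_square a) at 1 by lra. apply sqrt_le_1_alt. nra. }
  apply le_of_ln_le; [apply Rdiv_lt_0_compat; [|apply exp_pos]; lra|apply exp_pos|].
  rewrite ln_div, !ln_Rpower by (apply exp_pos || lra).
  generalize (ln_le (a / 2) _ ltac:(lra) Hphi). rewrite ln_div by lra. unfold a. rewrite ln_Rpower.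
  intros Hln. apply (Rmult_le_compat_l (1 / r)) in Hln; [|lra].
  replace (1 / r * (r * ln t - ln 2)) with (ln t - 1 / r * ln 2) in Hln by (field; lra). exact Hln.
Qed.

(** * Comparison of H_r (cosh x) with sinh x / x *)

Definition gap (r x : R) : R := ln (phi_inv (Rpower (sinh x / x) r)) - r * ln (cosh x).

Definition gap_weight (r x : R) : R :=
  2 * r * (sinh (2 * x) - 2 * x) / ((2 * Rpower (ratioA (2 * x)) r - 1) * x * sinh (2 * x)).

Definition gap_deriv (r x : R) : R :=
  gap_weight r x * (ratioB (2 * x) - Rpower (ratioA (2 * x)) r).

Lemma is_derive_gap (r x : R) : 0 < r -> 0 < x -> is_derive (gap r) x (gap_deriv r x).
Proof.
  intros Hr Hx.
  assert (Hh := sinhc_gt_1 x Hx). assert (Hs := sinh_pos x Hx). assert (Hc := cosh_ge_1 x).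
  assert (Hw := Rpower_ge_1 (sinh x / x) r ltac:(lra) ltac:(lra)).
  assert (Hsc : 2 * x < 2 * sinh x * cosh x).
  { rewrite <- sinh_double. generalize (sinh_sub_gt_cube (2 * x) ltac:(lra)).
    assert (0 < (2 * x) ^ 3) by (apply pow_lt; lra). lra. }
  unfold gap_deriv, gap_weight, ratioB. rewrite ratioA_double, Rpower_sq, sinh_double, cosh_double by lra.
  unfold gap, phi_inv, Rpower in *. unfold sinh, cosh in *.
  auto_derive; change ((exp x + - exp (- x)) * / 2 * / x) with ((exp x - exp (- x)) / 2 / x) in *;
    set (w := exp (r * ln ((exp x - exp (- x)) / 2 / x))) in *;
    assert (/ w <= 1) by (rewrite <- Rinv_1; apply Rinv_le_contravar; lra).
  - repeat split; lra.
  - rewrite exp_Ropp in *. set (u := exp x) in *. assert (0 < u) by apply exp_pos.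
    assert (0 < u * u - 1)
      by (replace (u * u - 1) with (2 * u * ((u - / u) / 2)) by (field; lra); nra).
    assert (0 < (u * u - 1) * (u * u + 1) - 2 * x * (u * (u * 2))).
    { replace ((u * u - 1) * (u * u + 1) - 2 * x * (u * (u * 2)))
        with (2 * (u * u) * (2 * ((u - / u) / 2) * ((u + / u) / 2) - 2 * x)) by (field; lra).
      apply Rmult_lt_0_compat; nra. }
    field. repeat split; nra.
Qed.

Lemma gap_weight_pos (r x : R) : 0 < r -> 0 < x -> 0 < gap_weight r x.
Proof.
  intros Hr Hx. unfold gap_weight.
  generalize (sinh_sub_gt_cube (2 * x) ltac:(lra)) (sinh_pos (2 * x) ltac:(lra))
    (Rpower_ge_1 _ r (proj1 (ratioA_bounds (2 * x) ltac:(lra))) ltac:(lra)).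
  assert (0 < (2 * x) ^ 3) by (apply pow_lt; lra). intros HM HS Hz.
  apply Rdiv_lt_0_compat; [nra|]. apply Rmult_lt_0_compat; [|lra]. apply Rmult_lt_0_compat; lra.
Qed.

Lemma gap_abs_le (r t : R) : 0 < r <= 1 -> 0 < t <= 1 -> Rabs (gap r t) <= 9 / 2 * t.
Proof.
  intros Hr Ht. unfold gap.
  assert (Hh := sinhc_gt_1 t ltac:(lra)). assert (Hhc := sinhc_lt_cosh t ltac:(lra)).
  set (w := Rpower (sinh t / t) r).
  assert (Hw1 : 1 <= w) by (apply Rpower_ge_1; lra).
  assert (Hwh : w <= sinh t / t).
  { unfold w. rewrite <- (Rpower_1 (sinh t / t)) at 2 by lra. apply Rle_Rpower; lra. }
  assert (Hphi : phi_inv w <= 3 * w - 2).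
  { unfold phi_inv. apply Rmult_le_reg_r with w; [lra|].
    replace ((2 * w - / w) * w) with (2 * w * w - 1) by (field; lra). nra. }
  generalize (ln_bounds_of_bounds (phi_inv w) (3 * w - 2) ltac:(split; [apply phi_inv_ge_1|]; lra))
    (ln_bounds_of_bounds (cosh t) (cosh t) ltac:(generalize (cosh_ge_1 t); lra))
    (cosh_sub_1_le_lin t ltac:(lra)).
  intros Hl1 Hl2 Hc. assert (r * ln (cosh t) <= ln (cosh t)) by nra.
  assert (0 <= r * ln (cosh t)) by nra.
  apply Rabs_le. lra.
Qed.

Lemma phi_inv_sinhc_pow_ge_1 (r x : R) : 0 <= r -> 0 < x -> 1 <= phi_inv (Rpower (sinh x / x) r).
Proof.
  intros Hr Hx. apply phi_inv_ge_1, Rpower_ge_1; [generalize (sinhc_gt_1 x Hx); lra|exact Hr].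
Qed.

Lemma lt_H_iff_gap_neg (r x : R) : 0 < r -> 0 < x ->
  (sinh x / x < H r (cosh x) <-> gap r x < 0).
Proof.
  intros Hr Hx. assert (Hh := sinhc_gt_1 x Hx). unfold gap.
  generalize (phi_inv_sinhc_pow_ge_1 r x ltac:(lra) Hx). intros Hphi.
  rewrite lt_H_iff, lt_iff_ln_lt, ln_Rpower by (apply exp_pos || lra).
  lra.
Qed.

Lemma H_lt_iff_gap_pos (r x : R) : 0 < r -> 0 < x ->
  (H r (cosh x) < sinh x / x <-> 0 < gap r x).
Proof.
  intros Hr Hx. assert (Hh := sinhc_gt_1 x Hx). unfold gap.
  generalize (phi_inv_sinhc_pow_ge_1 r x ltac:(lra) Hx). intros Hphi.
  rewrite H_lt_iff, lt_iff_ln_lt, ln_Rpower by (apply exp_pos || lra).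
  lra.
Qed.

Lemma gap_35_neg (x : R) : 0 < x -> gap (3 / 5) x < 0.
Proof.
  intros Hx. enough (0 < - gap (3 / 5) x) by lra.
  apply (pos_of_deriv_pos (fun t => - gap (3 / 5) t) (fun t => - gap_deriv (3 / 5) t) (9 / 2) x Hx).
  - intros t Ht. apply (is_derive_opp (gap (3 / 5))). apply is_derive_gap; lra.
  - intros t Ht. unfold gap_deriv.
    generalize (gap_weight_pos (3 / 5) t ltac:(lra) ltac:(lra))
      (ratioB_lt_ratioA_pow (2 * t) ltac:(lra)). nra.
  - intros t Ht. rewrite Rabs_Ropp. apply gap_abs_le; lra.
Qed.

Lemma gap_pos_near_0 (r : R) : 0 < r < 3 / 5 -> exists x, 0 < x /\ 0 < gap r x.
Proof.
  intros Hr. destruct (ratioA_pow_lt_ratioB_near_0 r Hr) as [d [Hd Hnear]].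
  exists (d / 2). split; [lra|].
  apply (pos_of_deriv_pos (gap r) (gap_deriv r) (9 / 2)); [lra| | |].
  - intros t Ht. apply is_derive_gap; lra.
  - intros t Ht. unfold gap_deriv.
    generalize (gap_weight_pos r t ltac:(lra) ltac:(lra)) (Hnear (2 * t) ltac:(lra)). nra.
  - intros t Ht. apply gap_abs_le; lra.
Qed.

Lemma H_lt_sinhc_of_nonpos (r x : R) : r <= 0 -> 0 < x -> H r (cosh x) < sinh x / x.
Proof.
  intros Hr Hx. eapply Rle_lt_trans; [apply H_le_cbrt|apply cbrt_cosh_lt_sinhc]; trivial.
  generalize (cosh_ge_1 x). lra.
Qed.

Lemma sinhc_lt_H_of_ge (r x : R) : 3 / 5 <= r -> 0 < x -> sinh x / x < H r (cosh x).
Proof.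
  intros Hr Hx. apply (lt_H_mono (3 / 5)); [lra|generalize (sinhc_gt_1 x Hx); lra|].
  apply lt_H_iff_gap_neg; [lra|exact Hx|apply gap_35_neg, Hx].
Qed.

Lemma exists_sinhc_lt_H (r : R) : 0 < r -> exists x, 0 < x /\ sinh x / x < H r (cosh x).
Proof.
  intros Hr. set (x := Rpower 2 (1 / r)). assert (Hx : 0 < x) by apply exp_pos.
  exists x. split; [exact Hx|].
  apply Rlt_le_trans with (cosh x / x); [|apply H_ge_div; [|generalize (cosh_ge_1 x)]; lra].
  apply Rmult_lt_compat_r; [apply Rinv_0_lt_compat, Hx|apply sinh_lt_cosh].
Qed.

Lemma exists_H_lt_sinhc (r : R) : r < 3 / 5 -> exists x, 0 < x /\ H r (cosh x) < sinh x / x.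
Proof.
  intros Hr. destruct (Rle_or_lt r 0) as [Hr0|Hr0].
  - exists 1. split; [lra|]. apply H_lt_sinhc_of_nonpos; lra.
  - destruct (gap_pos_near_0 r (conj Hr0 Hr)) as [x [Hx Hgap]].
    exists x. split; [exact Hx|]. apply H_lt_iff_gap_pos; assumption.
Qed.

Theorem corollary4p8 (alpha beta : R) :
  (forall x : R, 0 < x ->
     H alpha (cosh x) < sinh x / x /\ sinh x / x < H beta (cosh x))
  <-> (alpha <= 0 /\ 3/5 <= beta).
Proof.
  split.
  - intros Hall. split.
    + destruct (Rle_or_lt alpha 0) as [|Ha]; [assumption|exfalso].
      destruct (exists_sinhc_lt_H alpha Ha) as [x [Hx Hlt]].
      destruct (Hall x Hx). lra.
    + destruct (Rle_or_lt (3 / 5) beta) as [|Hb]; [assumption|exfalso].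
      destruct (exists_H_lt_sinhc beta Hb) as [x [Hx Hlt]].
      destruct (Hall x Hx). lra.
  - intros [Ha Hb] x Hx.
    split; [apply H_lt_sinhc_of_nonpos|apply sinhc_lt_H_of_ge]; assumption.
Qed.
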